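(* Let $G$ and $H$ be graphs, $k \in \mathbb{N}$, and suppose that $\Phi$ is a level-$k$ quantum isomorphism map from $G$ to $H$. If $M$ is the Choi matrix of $\Phi$, then $M_{s,t} = 0$ for $s,t \in (V(G)\times V(H))^k$ whenever some cyclic permutation of the string $s^R t$ contains consecutive letters $gh$ and $g'h'$ (with $g,g' \in V(G)$, $h,h' \in V(H)$) such that $\mathrm{rel}_G(g,g') \neq \mathrm{rel}_H(h,h')$.
   Context: Graphs are finite, undirected, without multiple edges; $G,H$ are simple. For $g,g'\in V(G)$ and $h,h'\in V(H)$, $\mathrm{rel}_G(g,g')=\mathrm{rel}_H(h,h')$ means both pairs are adjacent, both are non-adjacent distinct, or both are equal. Let $\Sigma = V(G)\times V(H)$; a letter $(g,h)$ is written $gh$. For a string $s=s_1\cdots s_k$, $s^R = s_k\cdots s_1$ is its reversal, and $st$ denotes concatenation. A $(k,k)$-bilabelled graph is $\boldsymbol{F}=(F,\boldsymbol{u},\boldsymbol{v})$ with $\boldsymbol{u},\boldsymbol{v}\in V(F)^k$; its homomorphism tensor $\boldsymbol{F}_G\in\mathbb{C}^{V(G)^k\times V(G)^k}$ has $(\boldsymbol{x},\boldsymbol{y})$-entry equal to the number of homomorphisms $h:F\to G$ with $h(u_i)=x_i$, $h(v_i)=y_i$. Atomic graphs: $\mathcal{Q}_k^P$ is the set of $(k,k)$-bilabelled minors (obtained by edge contraction, edge deletion, deletion of unlabelled vertices) of $\boldsymbol{C}_k=(C_k,(1,\dots,k),(k+1,\dots,2k))$, where $V(C_k)=[2k]$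 and $E(C_k)=\{\{i,i+1\}: i\in[2k], i\neq k,2k\}\cup\{\{1,k+1\},\{k,2k\}\}$; $\mathcal{Q}_k^S$ is the set of bilabelled minors of $\boldsymbol{M}_k=(M_k,(1,\dots,k),(k+1,\dots,2k))$ with $V(M_k)=[2k]$, $E(M_k)=\{\{i,i+k\}:i\in[k]\}$; $\mathcal{Q}_k=\mathcal{Q}_k^P\cup\mathcal{Q}_k^S$. $I$ and $J$ denote the identity and all-ones matrices, $\odot$ the Schur (entrywise) product. For $\sigma$ a permutation of the $2k$ label positions, $X^\sigma$ denotes the matrix obtained by permuting the $2k$ index coordinates accordingly; $\mathscr{C}(1,\dots,k,2k,\dots,k+1)$ is the group of cyclic permutations of the cyclic order $1,\dots,k,2k,\dots,k+1$. A linear map $\Phi:\mathbb{C}^{V(G)^k\times V(G)^k}\to\mathbb{C}^{V(H)^k\times V(H)^k}$ is a level-$k$ quantum isomorphism map from $G$ to $H$ if: $\Phi$ is completely positive; $\Phi(\boldsymbol{F}_G\odot X)=\boldsymbol{F}_H\odot\Phi(X)$ for all $\boldsymbol{F}\in\mathcal{Q}_k^P$ and all $X$; $\Phi(I)=I=\Phi^*(I)$; $\Phi(J)=J=\Phi^*(J)$; $\Phi(\boldsymbol{F}_G)=\boldsymbol{F}_H$ for all $\boldsymbol{F}\in\mathcal{Q}_k$; and $\Phi(X^\sigma)=\Phi(X)^\sigma$ for all $\sigma\in\mathscr{C}(1,\dots,k,2k,\dots,k+1)$. The Choi matrix $M$ of $\Phi$ is indexed by $(V(G)\times V(H))^k$,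 with $M_{g_1h_1\cdots g_kh_k,\,g'_1h'_1\cdots g'_kh'_k}=\Phi(E^{g_1\cdots g_k,\,g'_1\cdots g'_k})_{h_1\cdots h_k,\,h'_1\cdots h'_k}$, where $E^{\boldsymbol{x},\boldsymbol{y}}$ is the matrix unit. *)

From HB Require Import structures.
From mathcomp Require Import all_boot all_order all_algebra all_field.
Set Implicit Arguments. Unset Strict Implicit. Unset Printing Implicit Defensive.
Import Order.TTheory GRing.Theory Num.Theory.
Local Open Scope ring_scope.

Definition simple_graph (T : finType) (e : rel T) : Prop :=
  (forall x y, e x y = e y x) /\ (forall x, ~~ e x x).

Definition relg (T : finType) (e : rel T) (g g' : T) : nat :=
  if g == g' then 0%N else if e g g' then 1%N else 2%N.

Definition ktup (k : nat) (T : finType) := {ffun 'I_k -> T}.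
Definition kmat (k : nat) (T : finType) := ktup k T -> ktup k T -> algC.

Definition idm k (T : finType) : kmat k T := fun x y => (x == y)%:R.
Definition onem k (T : finType) : kmat k T := fun _ _ => 1.
Arguments idm : clear implicits.
Arguments onem : clear implicits.
Definition munit k (T : finType) (a b : ktup k T) : kmat k T :=
  fun x y => ((x == a) && (y == b))%:R.
Definition schur k (T : finType) (A B : kmat k T) : kmat k T :=
  fun x y => A x y * B x y.

Record blg (k : nat) := BLG {
  bv : finType; be : rel bv; bu : 'I_k -> bv; bw : 'I_k -> bv }.
Arguments bv {k} b : rename.
Arguments be {k} b _ _ : rename.
Arguments bu {k} b _ : rename.
Arguments bw {k} b _ : rename.

Definition homt k (F : blg k) (T : finType) (e : rel T) : kmat k T :=
  fun x y => #|[set h : {ffun bv F -> T} |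
      [forall a, forall b, be F a b ==> e (h a) (h b)]
   && [forall j, h (bu F j) == x j] && [forall j, h (bw F j) == y j]]|%:R.

(* bilabelled minors: closure under edge deletion, deletion of an unlabelled
   vertex and edge contraction (graphs taken up to isomorphism, parallel
   edges merged). *)
Inductive bl_minor k (F0 : blg k) : blg k -> Prop :=
| bm_refl : bl_minor F0 F0
| bm_del_edge (F : blg k) (a b : bv F) : bl_minor F0 F -> be F a b ->
    bl_minor F0 (@BLG k (bv F)
      (fun x y => be F x y && ~~ (((x == a) && (y == b)) || ((x == b) && (y == a))))
      (bu F) (bw F))
| bm_del_vertex (F : blg k) (a : bv F) (T : finType) (i : T -> bv F)
    (u w : 'I_k -> T) : bl_minor F0 F -> injective i ->
    (forall x, x != a <-> exists y, i y = x) ->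
    (forall j, i (u j) = bu F j) -> (forall j, i (w j) = bw F j) ->
    bl_minor F0 (@BLG k T (fun x y => be F (i x) (i y)) u w)
| bm_contract (F : blg k) (a b : bv F) (T : finType) (p : bv F -> T) :
    bl_minor F0 F -> be F a b ->
    (forall z, exists x, p x = z) ->
    (forall x y, p x = p y <-> (x = y \/ (x = a /\ y = b) \/ (x = b /\ y = a))) ->
    bl_minor F0 (@BLG k T
      (fun z1 z2 => (z1 != z2) &&
         [exists x, exists y, (p x == z1) && (p y == z2) && be F x y])
      (fun j => p (bu F j)) (fun j => p (bw F j))).

(* C_k with vertices 0..2k-1 (vertex i+1 of the paper is i here) *)
Definition ck_adj (k a b : nat) : bool :=
  [|| (a.+1 == b) && (a != k.-1), (a == 0%N) && (b == k)
    | (a == k.-1) && (b == (k + k).-1)].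
Definition Ck (k : nat) : blg k :=
  @BLG k 'I_(k + k)
    (fun a b => (ck_adj k a b || ck_adj k b a) && (a != b))
    (fun i => lshift k i) (fun i => rshift k i).
Definition Mk (k : nat) : blg k :=
  @BLG k 'I_(k + k) (fun a b => (a + k == b)%N || (b + k == a)%N)
    (fun i => lshift k i) (fun i => rshift k i).

Definition QP k (F : blg k) : Prop := bl_minor (Ck k) F.
Definition QS k (F : blg k) : Prop := bl_minor (Mk k) F.
Definition Q k (F : blg k) : Prop := QP F \/ QS F.

(* cyclic word x_1 .. x_k y_k .. y_1 ; rotating it by r gives X^sigma *)
Definition cword k (T : finType) (x y : ktup k T) : seq T :=
  [seq x i | i <- enum 'I_k] ++ rev [seq y i | i <- enum 'I_k].
Definition cperm k (T : finType) (r : nat) (X : kmat k T) : kmat k T :=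
  fun x y => let w := rot r (cword x y) in
    X [ffun i : 'I_k => nth (x i) w i] [ffun i : 'I_k => nth (x i) w ((k + k).-1 - i)].

Definition linmap k (TG TH : finType) (Phi : kmat k TG -> kmat k TH) : Prop :=
  forall (c : algC) (X Y : kmat k TG),
    Phi (fun x y => c * X x y + Y x y) = (fun a b => c * Phi X a b + Phi Y a b).

(* adjoint w.r.t. the Hilbert-Schmidt inner product <A,B> = sum conj(A) B *)
Definition adjoint k (TG TH : finType) (Phi : kmat k TG -> kmat k TH)
  : kmat k TH -> kmat k TG :=
  fun B x y => \sum_a \sum_b (Phi (munit x y) a b)^* * B a b.

Definition psd (I : finType) (A : I -> I -> algC) : Prop :=
  (forall i j, A j i = (A i j)^*) /\
  (forall v : I -> algC, 0 <= \sum_i \sum_j (v i)^* * A i j * v j).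

Definition completely_positive k (TG TH : finType)
    (Phi : kmat k TG -> kmat k TH) : Prop :=
  forall (n : nat) (X : 'I_n -> 'I_n -> kmat k TG),
    psd (fun p q : 'I_n * ktup k TG => X p.1 q.1 p.2 q.2) ->
    psd (fun p q : 'I_n * ktup k TH => Phi (X p.1 q.1) p.2 q.2).

Definition level_qiso_map k (TG : finType) (eG : rel TG) (TH : finType) (eH : rel TH)
    (Phi : kmat k TG -> kmat k TH) : Prop :=
  linmap Phi /\
  completely_positive Phi /\
  (forall F : blg k, QP F -> forall X,
      Phi (schur (homt F eG) X) = schur (homt F eH) (Phi X)) /\
  (Phi (idm k TG) = idm k TH /\ adjoint Phi (idm k TH) = idm k TG) /\
  (Phi (onem k TG) = onem k TH /\ adjoint Phi (onem k TH) = onem k TG) /\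
  (forall F : blg k, Q F -> Phi (homt F eG) = homt F eH) /\
  (forall r X, Phi (cperm r X) = cperm r (Phi X)).

Definition choi k (TG TH : finType) (Phi : kmat k TG -> kmat k TH)
    (s t : ktup k (prod TG TH)) : algC :=
  Phi (munit [ffun i => (s i).1] [ffun i => (t i).1])
      [ffun i => (s i).2] [ffun i => (t i).2].

Definition revcat k (L : finType) (s t : ktup k L) : seq L :=
  rev [seq s i | i <- enum 'I_k] ++ [seq t i | i <- enum 'I_k].

From mathcomp Require Import all_boot all_order all_algebra all_field zify.
From Stdlib Require Import FunctionalExtensionality.
Set Implicit Arguments. Unset Strict Implicit. Unset Printing Implicit Defensive.
Import GRing.Theory Num.Theory.
Local Open Scope ring_scope.

(* Phi commutes with Schur multiplication by the homomorphism tensor of every atomic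
   graph F in Q_k^P, and Schur multiplication by F_G merely rescales the matrix unit
   E^{xy} by F_G(x,y); hence Phi(E^{xy})_{ab} = 0 as soon as F_G(x,y) <> F_H(a,b).
   Read cyclically, s^R t walks once around C_k, whose vertices carry the labels of s
   and t, so two consecutive letters sit on an edge pq of C_k.  Deleting all other
   edges gives an atomic graph counting adjacency of the labels at p and q, and
   contracting pq and then deleting all edges gives one testing their equality;
   together they detect rel. *)

Lemma funext2 (A B C : Type) (f g : A -> B -> C) :
  (forall a b, f a b = g a b) -> f = g.
Proof. by move=> fg; do 2!apply: functional_extensionality => ?. Qed.

Lemma card_set_uniq (T : finType) (P : pred T) x :
  (forall y, P y -> y = x) -> #|[set y | P y]| = P x.
Proof.
move=> Puniq; have -> : [set y | P y] = if P x then [set x] else set0.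
  apply/setP => y; case: ifP => Px; rewrite !inE.
    by apply/idP/eqP => [/Puniq|->].
  by apply/negbTE; apply: contraFN Px => /[dup] /Puniq ->.
by case: (P x); rewrite ?cards1 ?cards0.
Qed.

Section LinearMap.

Variables (k : nat) (TG TH : finType) (Phi : kmat k TG -> kmat k TH).
Hypothesis Phi_lin : linmap Phi.

Lemma linmap0 : Phi (fun _ _ => 0) = fun _ _ => 0.
Proof.
apply: funext2 => a b.
have := congr1 (fun Y => Y a b) (Phi_lin 1 (fun _ _ => 0) (fun _ _ => 0)).
rewrite (_ : (fun _ _ => 1 * 0 + 0) = fun _ _ => 0); last first.
  by apply: funext2 => ? ?; rewrite mulr0 addr0.
by rewrite mul1r /= => /esym/eqP; rewrite -subr_eq0 addrK => /eqP.
Qed.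

Lemma linmapZ c X : Phi (fun x y => c * X x y) = fun a b => c * Phi X a b.
Proof.
have -> : (fun x y => c * X x y) = fun x y => c * X x y + (fun _ _ => 0) x y.
  by apply: funext2 => ? ?; rewrite addr0.
by rewrite Phi_lin linmap0; apply: funext2 => ? ?; rewrite addr0.
Qed.

Lemma schur_munit (A : kmat k TG) x y :
  schur A (munit x y) = fun u v => A x y * munit x y u v.
Proof.
apply: funext2 => u v; rewrite /schur /munit.
by case: (eqVneq u x) => [->|]; case: (eqVneq v y) => [->|] //=; rewrite !mulr0.
Qed.

Lemma linmap_munit_eq0 (A : kmat k TG) (B : kmat k TH) x y a b :
  (forall X, Phi (schur A X) = schur B (Phi X)) -> A x y != B a b ->
  Phi (munit x y) a b = 0.
Proof.
move=> PhiAB AB; have := congr1 (fun Y => Y a b) (PhiAB (munit x y)).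
rewrite schur_munit linmapZ /schur /= => /eqP.
by rewrite -subr_eq0 -mulrBl mulf_eq0 subr_eq0 (negbTE AB) => /eqP.
Qed.

End LinearMap.

Lemma bl_minor_subrel k (F0 : blg k) (T : finType) (e e' : rel T) (u w : 'I_k -> T) :
  bl_minor F0 (BLG e u w) -> subrel e' e -> symmetric e' ->
  bl_minor F0 (BLG e' u w).
Proof.
move En : #|[set ab : T * T | e ab.1 ab.2 && ~~ e' ab.1 ab.2]| => n.
elim/ltn_ind: n e En => n IH e En Fe e'e e'sym.
have [/setP extra0|[[a b]]] := set_0Vmem [set ab : T * T | e ab.1 ab.2 && ~~ e' ab.1 ab.2].
  suff -> : e' = e by [].
  apply: funext2 => x y; apply/idP/idP => [/e'e //|exy].
  by have := extra0 (x, y); rewrite !inE exy => /negbFE.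
rewrite inE /= => /andP[eab ne'ab].
pose del x y := (x == a) && (y == b) || (x == b) && (y == a).
pose e1 x y := e x y && ~~ del x y.
apply: (IH _ _ e1 erefl).
- rewrite -En; apply: proper_card; apply/properP; split.
    by apply/subsetP => -[x y]; rewrite !inE /= -andbA => /andP[-> /andP[_ ->]].
  by exists (a, b); rewrite !inE /= ?eab ?ne'ab // /e1 /del !eqxx andbF.
- exact: bm_del_edge Fe eab.
- move=> x y e'xy; rewrite /e1 e'e //=; apply: contraTN e'xy.
  by case/orP=> /andP[/eqP-> /eqP->]; rewrite // e'sym.
- by [].
Qed.

Definition lab k (T : Type) (x y : 'I_k -> T) (v : 'I_(k + k)) : T :=
  match split v with inl i => x i | inr j => y j end.

Lemma lab_lshift k (T : Type) (x y : 'I_k -> T) i : lab x y (lshift k i) = x i.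
Proof. by rewrite /lab (unsplitK (inl _ i : 'I_k + 'I_k)). Qed.

Lemma lab_rshift k (T : Type) (x y : 'I_k -> T) j : lab x y (rshift k j) = y j.
Proof. by rewrite /lab (unsplitK (inr _ j : 'I_k + 'I_k)). Qed.

Lemma lab_map k (T U : finType) (f : T -> U) (x y : 'I_k -> T) v :
  lab [ffun i => f (x i)] [ffun i => f (y i)] v = f (lab x y v).
Proof. by rewrite /lab; case: split => i; rewrite ffunE. Qed.

Lemma labelsP k (T : eqType) (x y : 'I_k -> T) (f : 'I_(k + k) -> T) :
  [forall i, f (lshift k i) == x i] && [forall j, f (rshift k j) == y j] =
  [forall v, f v == lab x y v].
Proof.
apply/andP/forallP => [[/forallP fx /forallP fy] v|fxy].
  rewrite -(splitK v); case: (split v) => i /=.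
    by rewrite lab_lshift fx.
  by rewrite lab_rshift fy.
split; apply/forallP => i.
  by have := fxy (lshift k i); rewrite lab_lshift.
by have := fxy (rshift k i); rewrite lab_rshift.
Qed.

Section AtomicGraphs.

Variables (k : nat) (p q : 'I_(k + k)).

Definition Ck_edge : blg k :=
  BLG (fun u v => (u == p) && (v == q) || (u == q) && (v == p))
    (bu (Ck k)) (bw (Ck k)).

Lemma QP_Ck_edge : be (Ck k) p q -> QP Ck_edge.
Proof.
move=> Cpq; apply: bl_minor_subrel (bm_refl _) _ _.
  by move=> u v /orP[] /andP[/eqP-> /eqP->] //=; rewrite orbC eq_sym.
by move=> u v; rewrite orbC [(u == q) && _]andbC [(u == p) && _]andbC.
Qed.

Lemma homt_Ck_edge (T : finType) (e : rel T) x y : symmetric e ->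
  homt Ck_edge e x y = (e (lab x y p) (lab x y q))%:R.
Proof.
move=> esym; rewrite /homt (card_set_uniq (x := [ffun v => lab x y v])) /=.
  rewrite -andbA labelsP (_ : [forall v, _] = true) ?andbT; last first.
    by apply/forallP => v; rewrite ffunE.
  congr (nat_of_bool _)%:R; apply/forallP/idP => [/(_ p)/forallP/(_ q)|epq a].
    by rewrite !eqxx !ffunE.
  by apply/forallP => b; apply/implyP => /orP[]/andP[/eqP-> /eqP->];
    rewrite !ffunE // esym.
move=> h; rewrite -andbA labelsP => /andP[_ /forallP hlab].
by apply/ffunP => v; rewrite ffunE; apply/eqP.
Qed.

Hypothesis pq : p != q.

Definition glue (v : 'I_(k + k)) : {v : 'I_(k + k) | v != q} :=
  insubd (exist _ p pq) v.

Lemma val_glue v : val (glue v) = if v != q then v else p.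
Proof. exact: val_insubd. Qed.

Lemma glueK (z : {v : 'I_(k + k) | v != q}) : glue (val z) = z.
Proof. by apply: val_inj; rewrite val_glue (valP z). Qed.

Definition Ck_glue : blg k :=
  BLG (fun _ _ => false) (glue \o bu (Ck k)) (glue \o bw (Ck k)).

Lemma QP_Ck_glue : be (Ck k) p q -> QP Ck_glue.
Proof.
move=> Cpq; apply: bl_minor_subrel (bm_contract (bm_refl _) Cpq _ _) _ _ => //.
  by move=> z; exists (val z); rewrite glueK.
move=> u v; split => [/(congr1 val)|].
  rewrite !val_glue.
  by case: (eqVneq u q) => [->|_]; case: (eqVneq v q) => [->|_] /= E; rewrite ?E; auto.
by case=> [->|[][-> ->]] //; apply: val_inj; rewrite !val_glue eqxx pq.
Qed.

Lemma homt_Ck_glue (T : finType) (e : rel T) x y :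
  homt Ck_glue e x y = (lab x y p == lab x y q)%:R.
Proof.
rewrite /homt (card_set_uniq (x := [ffun z => lab x y (val z)])) /=.
  rewrite -andbA (labelsP x y (fun v => _ (glue v))).
  rewrite [X in X && _](_ : _ = true) /=; last by apply/forallP => a; apply/forallP.
  congr (nat_of_bool _)%:R; apply/forallP/idP => [/(_ q)|pq_lab v].
    by rewrite !ffunE val_glue eqxx.
  rewrite ffunE val_glue.
  by case: (eqVneq v q) => [->|_] /=.
move=> h; rewrite -andbA (labelsP x y (fun v => h (glue v))) => /andP[_ /forallP hlab].
by apply/ffunP => z; rewrite ffunE -(eqP (hlab (val z))) glueK.
Qed.

End AtomicGraphs.

Lemma eqr_nat_of_bool (R : numDomainType) (b c : bool) :
  (b%:R == c%:R :> R) = (b == c).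
Proof. by rewrite eqr_nat; case: b; case: c. Qed.

Section QisoMap.

Variables (k : nat) (TG : finType) (eG : rel TG) (TH : finType) (eH : rel TH).
Variable (Phi : kmat k TG -> kmat k TH).
Hypothesis Phi_qiso : level_qiso_map eG eH Phi.

Lemma qiso_munit_eq0 (F : blg k) x y a b :
  QP F -> homt F eG x y != homt F eH a b -> Phi (munit x y) a b = 0.
Proof.
by case: Phi_qiso => Phi_lin [_ [Phi_schur _]] /Phi_schur; apply: linmap_munit_eq0.
Qed.

Hypotheses (eG_sym : symmetric eG) (eH_sym : symmetric eH).

Lemma qiso_munit_eq0_Ck_edge (p q : 'I_(k + k)) (x y : ktup k TG) (a b : ktup k TH) :
  be (Ck k) p q ->
  relg eG (lab x y p) (lab x y q) <> relg eH (lab a b p) (lab a b q) ->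
  Phi (munit x y) a b = 0.
Proof.
move=> Cpq rel_neq; have pq : p != q by case/andP: Cpq.
have [eq_eq|eq_neq] := eqVneq (lab x y p == lab x y q) (lab a b p == lab a b q).
  apply: (qiso_munit_eq0 (QP_Ck_edge Cpq)).
  rewrite !homt_Ck_edge // eqr_nat_of_bool.
  by apply: contra_not_neq rel_neq => e_eq; rewrite /relg eq_eq e_eq.
apply: (qiso_munit_eq0 (QP_Ck_glue pq Cpq)).
by rewrite !homt_Ck_glue eqr_nat_of_bool.
Qed.

End QisoMap.

Definition ck_vertex k (m : 'I_(k + k)) : 'I_(k + k) :=
  match split m with inl i => lshift k (rev_ord i) | inr j => rshift k j end.

Lemma val_ck_vertex k (m : 'I_(k + k)) :
  val (ck_vertex m) = if (m < k)%N then (k.-1 - m)%N else m.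
Proof.
rewrite /ck_vertex; case: splitP => [i|j] /= -> //.
by rewrite subnS predn_sub.
Qed.

Lemma Ck_ck_vertexS k (m : 'I_(k + k)) : be (Ck k) (ck_vertex m) (ck_vertex (ordS m)).
Proof.
rewrite /= -val_eqE !val_ck_vertex /= /ck_adj.
have := ltn_ord m; case: (ltnP m.+1 (k + k)) => [mS_lt|mS_ge] m_lt.
  by rewrite modn_small //; do 2!case: ifP; lia.
have -> : m.+1 = (k + k)%N by lia.
by rewrite modnn; do 2!case: ifP; lia.
Qed.

Lemma size_revcat k (T : finType) (s t : ktup k T) : size (revcat s t) = (k + k)%N.
Proof.
by rewrite /revcat size_cat size_rev size_map size_enum_ord size_map size_enum_ord.
Qed.

Lemma nth_revcat k (T : finType) (s t : ktup k T) d (m : 'I_(k + k)) :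
  nth d (revcat s t) m = lab s t (ck_vertex m).
Proof.
rewrite /revcat /ck_vertex nth_cat size_rev size_map size_enum_ord.
case: splitP => [i|j] /= ->.
  rewrite lab_lshift nth_rev size_map size_enum_ord //.
  rewrite -[(k - i.+1)%N]/(val (rev_ord i)) (nth_map i) ?nth_ord_enum //.
  by rewrite size_enum_ord ltn_ord.
by rewrite addKn lab_rshift (nth_map j) ?nth_ord_enum ?size_enum_ord.
Qed.

Lemma nth_rot_mod (T : Type) (d : T) (w : seq T) r i :
  (i < size w)%N -> (r <= size w)%N ->
  nth d (rot r w) i = nth d w ((i + r) %% size w).
Proof.
move=> i_lt r_le; rewrite /rot nth_cat size_drop; case: ifP => i_lt_drop.
  by rewrite nth_drop modn_small ?[(r + i)%N]addnC //; lia.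
rewrite nth_take; last lia.
have -> : (i + r = (i - (size w - r)) + size w)%N by lia.
by rewrite modnDr modn_small //; lia.
Qed.

Lemma nth_rot_consecutive (T : Type) (d : T) (w : seq T) n r j :
  size w = n -> (j.+1 < n)%N ->
  exists m : 'I_n,
    nth d (rot r w) j = nth d w m /\ nth d (rot r w) j.+1 = nth d w (ordS m).
Proof.
move=> <- jS_lt; have w_gt0 : (0 < size w)%N by lia.
case: (leqP r (size w)) => [r_le|r_gt].
  exists (Ordinal (ltn_pmod (j + r) w_gt0)); rewrite /= !nth_rot_mod //; try lia.
  by rewrite -[((j + r) %% size w).+1]addn1 modnDml addn1.
rewrite rot_oversize; last exact: ltnW.
by exists (Ordinal (ltnW jS_lt)); rewrite /= modn_small.
Qed.

Theorem lemma3p4 (TG : finType) (eG : rel TG) (TH : finType) (eH : rel TH)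
  (k : nat) (Phi : kmat k TG -> kmat k TH) :
  simple_graph eG -> simple_graph eH ->
  level_qiso_map eG eH Phi ->
  forall s t : ktup k (prod TG TH),
  (exists (r j : nat) (g g' : TG) (h h' : TH),
      [/\ (j.+1 < k + k)%N,
          nth (g, h) (rot r (revcat s t)) j = (g, h),
          nth (g, h) (rot r (revcat s t)) j.+1 = (g', h') &
          relg eG g g' <> relg eH h h']) ->
  choi Phi s t = 0.
Proof.
move=> [eG_sym _] [eH_sym _] Phi_qiso s t [r [j [g [g' [h [h' [jS_lt Eg Eg' rel_neq]]]]]]].
have [m [Em EmS]] := nth_rot_consecutive (g, h) r (size_revcat s t) jS_lt.
apply: (qiso_munit_eq0_Ck_edge Phi_qiso eG_sym eH_sym (Ck_ck_vertexS m)).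
by rewrite !lab_map -!(nth_revcat s t (g, h)) -Em -EmS Eg Eg'.
Qed.
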